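(* In the setting below, suppose the execution is nonempty, its last transition belongs to a committed block, and no pair of consecutive transitions is swappable. Then every block is committed and every block is interference-free, i.e. the transitions of each block occupy a contiguous segment $t_i,t_{i+1},\dots,t_j$ of the execution.
   Context: **Setting.** An execution is a finite sequence $t_1,\dots,t_n$ of pairwise distinct transitions, with execution order $t_i<_E t_j$ iff $i<j$. - **Blocks.** The transitions are partitioned into blocks, and $\mathsf{block}(t)$ denotes the block containing $t$. Each block is either committed or uncommitted. - **Labels.** Each transition $t$ has a label $\mathit{label}(t)\in\{\mathbf R,\mathbf N,\mathbf L\}$. Every committed block contains exactly one transition labelled $\mathbf N$, called its commit transition; transitions of that block occurring before it (in $<_E$) are labelled $\mathbf R$, and those occurring after it are labelled $\mathbf L$. Every transition of an uncommitted block is labelled $\mathbf R$. - **Commit.** For $t$ in a committed block, $\mathsf{commit}(t)$ denotes the commit transition of $\mathsf{block}(t)$. - **Order on uncommitted blocks.** $<_O$ is a fixed strict total order on the uncommitted blocks. **Swappable pairs.** Two transitions $t_A=t_i$ and $t_B=t_{i+1}$ that are consecutive in the execution are swappable iff one of the following holds: 1. $t_A$ is in an uncommitted block and $t_B$ is in a committed block; 2. both are in committed blocks and $\mathsf{commit}(t_B)<_E\mathsf{commit}(t_A)$; 3. both are in uncommitted blocks and $\mathsf{block}(t_B)<_O\mathsf{block}(t_A)$. *)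

From mathcomp Require Import all_boot.
Set Implicit Arguments. Unset Strict Implicit. Unset Printing Implicit Defensive.

Inductive label := LR | LN | LL.

Definition label_eqb (a b : label) : bool :=
  match a, b with LR, LR | LN, LN | LL, LL => true | _, _ => false end.

(* An execution t_1..t_n is modelled by the positions 'I_n (pairwise distinct
   transitions, execution order = order of positions).
   blk : block of each transition (blocks = values of type B),
   committed : which blocks are committed, lab : labels,
   ordO : the fixed order <_O on blocks (only used on uncommitted ones). *)
Section Exec.
Variables (n : nat) (B : Type) (blk : 'I_n -> B) (committed : B -> Prop)
          (lab : 'I_n -> label) (ordO : B -> B -> Prop).

Definition well_labelled : Prop :=
  (forall t : 'I_n, committed (blk t) ->
     exists! c : 'I_n, blk c = blk t /\ lab c = LN) /\
  (forall t c : 'I_n, committed (blk t) -> blk c = blk t -> lab c = LN ->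
     (t < c -> lab t = LR) /\ (c < t -> lab t = LL)) /\
  (forall t : 'I_n, ~ committed (blk t) -> lab t = LR).

Definition strict_total_on_uncommitted : Prop :=
  (forall b, ~ committed b -> ~ ordO b b) /\
  (forall a b c, ~ committed a -> ~ committed b -> ~ committed c ->
     ordO a b -> ordO b c -> ordO a c) /\
  (forall a b, ~ committed a -> ~ committed b -> a <> b -> ordO a b \/ ordO b a).

Definition is_commit (t c : 'I_n) : Prop :=
  committed (blk t) /\ blk c = blk t /\ lab c = LN.

Definition swappable (tA tB : 'I_n) : Prop :=
  (~ committed (blk tA) /\ committed (blk tB)) \/
  (committed (blk tA) /\ committed (blk tB) /\
     exists cA cB : 'I_n, is_commit tA cA /\ is_commit tB cB /\ cB < cA) \/
  (~ committed (blk tA) /\ ~ committed (blk tB) /\ ordO (blk tB) (blk tA)).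

Definition contiguous_block (b : B) : Prop :=
  forall i j k : 'I_n, i <= j -> j <= k -> blk i = b -> blk k = b -> blk j = b.

End Exec.

From Stdlib Require Import Classical ClassicalEpsilon.
From mathcomp Require Import all_boot.

Set Implicit Arguments.
Unset Strict Implicit.
Unset Printing Implicit Defensive.

(* An uncommitted transition directly followed by a committed one is swappable,
   so, starting from the committed last transition, every transition is
   committed.  Two consecutive committed transitions that are not swappable have
   their commit transitions in execution order, so the map t |-> commit(t) is
   monotone.  As it is constant on each block and its value lies in that block,
   a transition lying between two transitions of a block has the same commit,
   hence belongs to the same block. *)

Lemma ord_down_ind n (P : 'I_n.+1 -> Prop) :
  P ord_max -> (forall i j : 'I_n.+1, j = i.+1 :> nat -> P j -> P i) ->
  forall t, P t.
Proof.
move=> Pmax Pstep.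
suff Pd : forall d (t : 'I_n.+1), n - t = d -> P t by move=> t; exact: (Pd _ t erefl).
elim=> [|d IHd] t tn.
  have -> : t = ord_max by apply/val_inj/eqP; rewrite eqn_leq -ltnS ltn_ord -subn_eq0 tn.
  exact: Pmax.
have lt_tn : t.+1 < n.+1 by rewrite ltnS -subn_gt0 tn.
by apply: (Pstep t (Ordinal lt_tn)) => //; apply: IHd; rewrite /= subnS tn.
Qed.

Lemma ord_homo_leq n (f : 'I_n -> nat) :
  (forall i j : 'I_n, j = i.+1 :> nat -> f i <= f j) ->
  {homo f : i j / i <= j}.
Proof.
move=> f_step.
suff fd : forall d (i j : 'I_n), j = i + d :> nat -> f i <= f j.
  by move=> i j le_ij; apply: (fd (j - i)); rewrite subnKC.
elim=> [|d IHd] i j ji.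
  by have -> : i = j by apply/val_inj; rewrite /= ji addn0.
have lt_in : i.+1 < n by rewrite (leq_ltn_trans _ (ltn_ord j)) // ji addnS ltnS leq_addr.
apply: leq_trans (f_step i (Ordinal lt_in) erefl) (IHd _ _ _).
by rewrite ji addnS addSn.
Qed.

Section Execution.
Variables (n : nat) (B : Type) (blk : 'I_n -> B) (committed : B -> Prop)
          (lab : 'I_n -> label) (ordO : B -> B -> Prop).

Local Notation is_commit := (is_commit blk committed lab).
Local Notation swappable := (swappable blk committed lab ordO).

Lemma committed_of_not_swappable (i j : 'I_n) :
  ~ swappable i j -> committed (blk j) -> committed (blk i).
Proof. by move=> not_sw cj; apply: NNPP => nci; apply: not_sw; left. Qed.

Lemma commit_le_of_not_swappable (i j ci cj : 'I_n) :
  ~ swappable i j -> is_commit i ci -> is_commit j cj -> ci <= cj.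
Proof.
move=> not_sw iP jP; rewrite leqNgt; apply/negP => lt_cj.
apply: not_sw; right; left.
by split; [case: iP | split; [case: jP | exists ci, cj]].
Qed.

Hypothesis commit_unique : forall t : 'I_n, committed (blk t) ->
  exists! c : 'I_n, blk c = blk t /\ lab c = LN.

Lemma is_commit_functional (i k c c' : 'I_n) :
  blk i = blk k -> is_commit i c -> is_commit k c' -> c = c'.
Proof.
move=> ik [ci [c_blk c_lab]] [_ [c'_blk c'_lab]].
have [c0 [_ c0_uniq]] := commit_unique ci.
have <- := c0_uniq c (conj c_blk c_lab).
by apply: c0_uniq; rewrite c'_blk ik.
Qed.

Lemma exists_commit_map : (forall t, committed (blk t)) ->
  exists commit : 'I_n -> 'I_n, forall t, is_commit t (commit t).
Proof.
move=> all_com; apply: choice => t.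
by have [c [[c_blk c_lab] _]] := commit_unique (all_com t); exists c.
Qed.

Lemma contiguous_block_of_homo_commit (commit : 'I_n -> 'I_n) :
  (forall t, is_commit t (commit t)) ->
  {homo (fun t => nat_of_ord (commit t)) : i j / i <= j} ->
  forall b, contiguous_block blk b.
Proof.
move=> commitP commit_homo b i j k le_ij le_jk ib kb.
have commit_ki : commit k = commit i.
  by apply: (is_commit_functional _ (commitP k) (commitP i)); rewrite kb ib.
have commit_ji : commit j = commit i.
  apply/val_inj/eqP; rewrite eqn_leq -{1}commit_ki.
  by rewrite (commit_homo _ _ le_jk) (commit_homo _ _ le_ij).
have [_ [cj_blk _]] := commitP j; have [_ [ci_blk _]] := commitP i.
by rewrite -cj_blk commit_ji ci_blk.
Qed.

End Execution.

Theorem mainTheorem7 (n : nat) (B : Type) (blk : 'I_n.+1 -> B)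
    (committed : B -> Prop) (lab : 'I_n.+1 -> label) (ordO : B -> B -> Prop) :
  well_labelled blk committed lab ->
  strict_total_on_uncommitted committed ordO ->
  committed (blk ord_max) ->
  (forall (i j : 'I_n.+1), j = i.+1 :> nat ->
     ~ swappable blk committed lab ordO i j) ->
  forall t : 'I_n.+1,
    committed (blk t) /\ contiguous_block blk (blk t).
Proof.
move=> [commit_unique _] _ last_com not_sw.
have all_com : forall t, committed (blk t).
  apply: ord_down_ind => // i j ji.
  exact: committed_of_not_swappable (not_sw i j ji).
have [commit commitP] := exists_commit_map commit_unique all_com.
have commit_homo : {homo (fun t => nat_of_ord (commit t)) : i j / i <= j}.
  apply: ord_homo_leq => i j ji.
  exact: commit_le_of_not_swappable (not_sw i j ji) (commitP i) (commitP j).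
move=> t; split; first exact: all_com.
exact: (contiguous_block_of_homo_commit commit_unique commitP commit_homo).
Qed.
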